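(* Let $\mathbf{L}=U^{\oplus3}\oplus[-2]^{\oplus2}$. If $G\subset\mathrm{O}(\mathbf{L})$ is a group with $|G|=2$ whose image $G^{\sharp}$ in $\mathrm{O}(\mathbf{L}^{\sharp})$ is trivial, then $\mathbf{L}_G$ and $\mathbf{L}^G$ are $2$-elementary lattices.
   Context: $U$ is the hyperbolic plane, $[n]$ the rank one lattice generated by a vector of square $n$. $\mathbf{L}^{\sharp}=\mathbf{L}^*/\mathbf{L}$ is the discriminant group and $G^{\sharp}$ is the image of $G$ under the natural map $\mathrm{O}(\mathbf{L})\to\mathrm{O}(\mathbf{L}^{\sharp})$. A lattice is $2$-elementary if its discriminant group is isomorphic to $(\mathbb{Z}/2\mathbb{Z})^{\oplus a}$ for some $a\ge0$. $\mathbf{L}^G$ is the invariant sublattice and $\mathbf{L}_G=(\mathbf{L}^G)^{\perp}$ the coinvariant sublattice. *)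

From HB Require Import structures.
From mathcomp Require Import all_boot all_order all_algebra.
Set Implicit Arguments. Unset Strict Implicit. Unset Printing Implicit Defensive.
Import Order.TTheory GRing.Theory Num.Theory.
Local Open Scope ring_scope.

(* Lattices are modelled inside Z^n (column vectors of integers); the
   rational extension L (x) Q is 'cV[rat]_n.  A bilinear form is given by
   its (symmetric) Gram matrix B. *)

(* Gram matrix of L = U^{+3} (+) [-2]^{+2}: coordinates 0..5 form three
   hyperbolic planes {0,1},{2,3},{4,5}; coordinates 6,7 have square -2. *)
Definition gramL : 'M[int]_8 :=
  \matrix_(i < 8, j < 8)
    if (i < 6)%N then (if (i./2 == j./2)%N && (i != j :> nat) then 1 else 0)
    else if (i == j :> nat) then -2 else 0.

Definition bform n (B : 'M[int]_n) (x y : 'cV[int]_n) : int :=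
  (x^T *m B *m y) 0 0.

Definition bformQ n (B : 'M[int]_n) (x y : 'cV[rat]_n) : rat :=
  (x^T *m map_mx intr B *m y) 0 0.

Definition toQ n (v : 'cV[int]_n) : 'cV[rat]_n := map_mx intr v.

Definition isZ (q : rat) : Prop := exists z : int, q = z%:~R.

(* O(L): integral isometries (invertibility over Z follows since det B <> 0) *)
Definition is_isometryL n (B : 'M[int]_n) (g : 'M[int]_n) : Prop :=
  g^T *m B *m g = B.

Definition in_dualL n (B : 'M[int]_n) (x : 'cV[rat]_n) : Prop :=
  forall m : 'cV[int]_n, isZ (bformQ B x (toQ m)).

(* G^# trivial: every element of G acts trivially on L^*/L, i.e.
   g x - x in L for all x in L^*. *)
Definition acts_trivially_on_discr n (B : 'M[int]_n) (g : 'M[int]_n) : Prop :=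
  forall x : 'cV[rat]_n, in_dualL B x ->
    exists v : 'cV[int]_n, map_mx intr g *m x - x = toQ v.

(* A sublattice is a subgroup M of Z^n, given as a predicate. *)
Definition in_span n (M : 'cV[int]_n -> Prop) (x : 'cV[rat]_n) : Prop :=
  exists c : int, c != 0 /\ exists m, M m /\ c%:~R *: x = toQ m.

Definition in_dual n (B : 'M[int]_n) (M : 'cV[int]_n -> Prop)
    (x : 'cV[rat]_n) : Prop :=
  in_span M x /\ forall m, M m -> isZ (bformQ B x (toQ m)).

Definition nondegenerate n (B : 'M[int]_n) (M : 'cV[int]_n -> Prop) : Prop :=
  forall m, M m -> (forall m', M m' -> bform B m m' = 0) -> m = 0.

(* M is 2-elementary: M is a nondegenerate lattice whose (finite)
   discriminant group M^*/M is an elementary abelian 2-group, i.e.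
   isomorphic to (Z/2Z)^a; equivalently 2 * M^* is contained in M. *)
Definition two_elementary n (B : 'M[int]_n) (M : 'cV[int]_n -> Prop) : Prop :=
  nondegenerate B M /\
  forall x, in_dual B M x -> exists m, M m /\ 2%:R *: x = toQ m.

(* invariant sublattice L^G for G = {1, g} *)
Definition invariant_lat n (g : 'M[int]_n) (v : 'cV[int]_n) : Prop :=
  g *m v = v.

Definition coinvariant_lat n (B : 'M[int]_n) (g : 'M[int]_n)
    (v : 'cV[int]_n) : Prop :=
  forall w, invariant_lat g w -> bform B v w = 0.

(* Put L_eps = {v | g v = eps v} for eps = 1 or -1; then L^G = L_1 and, g being
   an involutive isometry, L_G = L_-1.  For y in L the vector y + eps g y lies
   in L_eps and pairs with every x in L_eps (x) Q to 2 b(x, y); this gives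
   nondegeneracy.  For u in L^*, the vector u + eps g u is still integral:
   2u is in L because L is 2-elementary, and g u - u is in L because G^# = 1.
   Hence for x in L_eps^* the number 2 b(x, u) = b(x, u + eps g u) is an integer
   for every u in L^*, i.e. 2x lies in L^** = L. *)

From mathcomp Require Import all_boot all_order all_algebra.
Set Implicit Arguments. Unset Strict Implicit. Unset Printing Implicit Defensive.
Import Order.TTheory GRing.Theory Num.Theory.
Local Open Scope ring_scope.

Lemma toQ_inj n : injective (@toQ n).
Proof.
move=> u v /matrixP uv; apply/matrixP => i j.
by have := uv i j; rewrite !mxE => /intr_inj.
Qed.

Lemma toQ_integral n (x : 'cV[rat]_n) :
  (forall i, isZ (x i 0)) -> exists m, toQ m = x.
Proof.
move=> xZ; exists (map_mx numq x); apply/matrixP => i j; rewrite (ord1 j) !mxE.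
by have [z ->] := xZ i; rewrite numq_int.
Qed.

Lemma toQD n (u v : 'cV[int]_n) : toQ (u + v) = toQ u + toQ v.
Proof. exact: map_mxD. Qed.

Lemma toQN n (v : 'cV[int]_n) : toQ (- v) = - toQ v.
Proof. exact: map_mxN. Qed.

Lemma toQZ n (a : int) (v : 'cV[int]_n) : toQ (a *: v) = a%:~R *: toQ v.
Proof. exact: map_mxZ. Qed.

Lemma toQM n (A : 'M[int]_n) v : toQ (A *m v) = map_mx intr A *m toQ v.
Proof. exact: map_mxM. Qed.

Section BilinearForm.
Variables (n : nat) (B : 'M[int]_n).
Local Notation b := (bformQ B).

Lemma bformQDl x y z : b (x + y) z = b x z + b y z.
Proof. by rewrite /bformQ linearD /= !mulmxDl mxE. Qed.

Lemma bformQDr x y z : b x (y + z) = b x y + b x z.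
Proof. by rewrite /bformQ mulmxDr mxE. Qed.

Lemma bformQZl a x y : b (a *: x) y = a * b x y.
Proof. by rewrite /bformQ linearZ /= -!scalemxAl mxE. Qed.

Lemma bformQZr a x y : b x (a *: y) = a * b x y.
Proof. by rewrite /bformQ -scalemxAr mxE. Qed.

Lemma bform_toQ u v : (bform B u v)%:~R = b (toQ u) (toQ v).
Proof. by rewrite /bformQ /toQ /bform map_trmx -!map_mxM [RHS]mxE. Qed.

Lemma bformQ_sym : B^T = B -> forall x y, b x y = b y x.
Proof.
move=> B_sym x y; have tr11 (A : 'M[rat]_1) : A 0 0 = A^T 0 0 by rewrite mxE.
by rewrite /bformQ tr11 !trmx_mul trmxK map_trmx B_sym mulmxA.
Qed.

End BilinearForm.

Section TwoElementaryEigenlattice.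

(* C = 2 B^-1 is integral exactly when L is 2-elementary; the columns of C / 2
   form the basis of L^* dual to the standard basis of L. *)
Variables (n : nat) (B C g : 'M[int]_n).
Hypotheses (B_sym : B^T = B) (mulBC : B *m C = 2%:M).
Hypotheses (g_isom : is_isometryL B g) (g_invol : g *m g = 1%:M).
Hypothesis g_discr : acts_trivially_on_discr B g.

Local Notation b := (bformQ B).
Local Notation gQ := (map_mx (intr : int -> rat) g).

Lemma bformQ_colC x j : b x (toQ (col j C)) = 2 * x j 0.
Proof.
rewrite /bformQ /toQ map_col colE !mulmxA -(mulmxA x^T) -map_mxM mulBC.
by rewrite map_scalar_mx mul_mx_scalar -scalemxAl mxE -colE !mxE.
Qed.

Lemma bformQ_colC_eq0 v : (forall j, b (toQ v) (toQ (col j C)) = 0) -> v = 0.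
Proof.
move=> v_perp; apply/matrixP => j k; rewrite (ord1 k) [RHS]mxE.
apply: (@intr_inj rat); have /eqP := v_perp j.
by rewrite bformQ_colC mulf_eq0 pnatr_eq0 mxE => /eqP->; rewrite mulr0z.
Qed.

Lemma dualL_half_colC j : in_dualL B (2^-1 *: toQ (col j C)).
Proof.
move=> m; rewrite bformQZl bformQ_sym // bformQ_colC mulrA mulVf // mul1r.
by exists (m j 0); rewrite mxE.
Qed.

Lemma bformQ_g_adjoint x y : b x (gQ *m y) = b (gQ *m x) y.
Proof.
have gTB : g^T *m B = B *m g by rewrite -[in RHS]g_isom -mulmxA g_invol mulmx1.
by rewrite /bformQ trmx_mul !mulmxA -!(mulmxA x^T) map_trmx -!map_mxM gTB.
Qed.

Lemma coinvariant_latE v : coinvariant_lat B g v <-> g *m v = -1 *: v.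
Proof.
split=> [v_perp | gv w gw].
- apply/eqP; rewrite scaleN1r -addr_eq0 addrC; apply/eqP.
  apply: bformQ_colC_eq0 => j.
  have gw : invariant_lat g (col j C + g *m col j C).
    by rewrite /invariant_lat mulmxDr mulmxA g_invol mul1mx addrC.
  have /(congr1 (fun z : int => z%:~R : rat)) := v_perp _ gw.
  by rewrite bform_toQ !toQD !toQM bformQDr bformQ_g_adjoint -bformQDl.
- apply: (@intr_inj rat); rewrite bform_toQ mulr0z.
  have : b (toQ v) (toQ w) = - b (toQ v) (toQ w).
    by rewrite -{1}gw toQM bformQ_g_adjoint -toQM gv toQZ bformQZl rmorphN1 mulN1r.
  by move/eqP; rewrite -addr_eq0 -mulr2n mulrn_eq0 => /eqP.
Qed.

Variables (M : 'cV[int]_n -> Prop) (eps : int).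
Hypotheses (eps2 : eps ^+ 2 = 1) (M_eigen : forall v, M v <-> g *m v = eps *: v).

Local Notation e := (eps%:~R : rat).

Lemma eps2Q : e ^+ 2 = 1.
Proof. by rewrite -(rmorphXn (intr : int -> rat)) eps2. Qed.

Lemma M_eigenQ v : M v <-> gQ *m toQ v = e *: toQ v.
Proof.
split=> [/M_eigen gv | gv]; first by rewrite -toQM gv toQZ.
by apply/M_eigen/toQ_inj; rewrite toQM toQZ.
Qed.

Lemma eigen_symmetrize (y : 'cV[rat]_n) :
  gQ *m (y + e *: (gQ *m y)) = e *: (y + e *: (gQ *m y)).
Proof.
have gQ2 : gQ *m gQ = 1%:M by rewrite -map_mxM g_invol map_mx1.
by rewrite mulmxDr -scalemxAr mulmxA gQ2 mul1mx scalerDr scalerA -expr2 eps2Q scale1r addrC.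
Qed.

Lemma bformQ_symmetrize x y :
  gQ *m x = e *: x -> b x (y + e *: (gQ *m y)) = 2 * b x y.
Proof.
move=> gx; rewrite bformQDr bformQZr bformQ_g_adjoint gx bformQZl mulrA -expr2.
by rewrite eps2Q mul1r mulr2n mulrDl mul1r.
Qed.

Lemma in_span_eigen x : in_span M x -> gQ *m x = e *: x.
Proof.
case=> c [c0 [m [/M_eigenQ gm cx]]]; apply: (@scalerI _ _ (c%:~R : rat)).
  by rewrite intr_eq0.
by rewrite scalemxAr cx gm -cx scalerA mulrC -scalerA.
Qed.

Lemma eigen_nondegenerate : nondegenerate B M.
Proof.
move=> m Mm m_perp; apply: bformQ_colC_eq0 => j.
have Mw : M (col j C + eps *: (g *m col j C)).
  by apply/M_eigenQ; rewrite toQD toQZ toQM eigen_symmetrize.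
have /(congr1 (fun z : int => z%:~R : rat)) := m_perp _ Mw.
rewrite bform_toQ toQD toQZ toQM bformQ_symmetrize; last exact/M_eigenQ.
by move/eqP; rewrite mulr0z mulf_eq0 pnatr_eq0 => /eqP.
Qed.

Lemma symmetrize_dual_integral u y : in_dualL B u -> toQ y = 2 *: u ->
  exists2 w, M w & toQ w = u + e *: (gQ *m u).
Proof.
move=> u_dual yu; have [v gu] := g_discr u_dual.
suff [w wu] : exists w, toQ w = u + e *: (gQ *m u).
  by exists w => //; apply/M_eigenQ; rewrite wu eigen_symmetrize.
have /orP[/eqP-> | /eqP->] : (eps == 1) || (eps == -1) by rewrite -sqrf_eq1 eps2.
- exists (y + v); rewrite toQD yu -gu rmorph1 scale1r scaler_nat mulr2n.
  by rewrite addrC addrA subrK addrC.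
- by exists (- v); rewrite toQN -gu rmorphN1 scaleN1r opprB addrC.
Qed.

Lemma eigen_dual_mul2 x : in_dual B M x -> exists m, M m /\ 2%:R *: x = toQ m.
Proof.
case=> /in_span_eigen gx x_dual.
have [m xm] : exists m, toQ m = 2 *: x.
  apply: toQ_integral => j; rewrite mxE -bformQ_colC.
  have Cj : toQ (col j C) = 2 *: (2^-1 *: toQ (col j C)).
    by rewrite scalerA divff // scale1r.
  have [w Mw wu] := symmetrize_dual_integral (dualL_half_colC j) Cj.
  have := x_dual _ Mw.
  by rewrite wu bformQ_symmetrize // bformQZr mulrA divff // mul1r.
exists m; split => //; apply/M_eigenQ.
by rewrite xm -scalemxAr gx !scalerA mulrC.
Qed.

Theorem two_elementary_eigenlattice : two_elementary B M.
Proof. by split; [exact: eigen_nondegenerate | exact: eigen_dual_mul2]. Qed.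

End TwoElementaryEigenlattice.

Definition gramL_inv2 : 'M[int]_8 :=
  \matrix_(i < 8, j < 8)
    if (i < 6)%N then 2 * gramL i j else if i == j then -1 else 0.

Lemma gramL_sym : gramL^T = gramL.
Proof.
apply/matrixP => i j; rewrite !mxE.
by case: i => [[|[|[|[|[|[|[|[|//]]]]]]]] ?]; case: j => [[|[|[|[|[|[|[|[|//]]]]]]]] ?].
Qed.

Lemma gramL_mul_inv2 : gramL *m gramL_inv2 = 2%:M.
Proof.
apply/matrixP => i j; rewrite !mxE !big_ord_recr big_ord0 /= !mxE.
by case: i => [[|[|[|[|[|[|[|[|//]]]]]]]] ?]; case: j => [[|[|[|[|[|[|[|[|//]]]]]]]] ?].
Qed.

Theorem lemma4p2 (g : 'M[int]_8) :
  is_isometryL gramL g ->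
  g *m g = 1%:M ->
  g != 1%:M ->
  acts_trivially_on_discr gramL g ->
  two_elementary gramL (coinvariant_lat gramL g) /\
  two_elementary gramL (invariant_lat g).
Proof.
move=> g_isom g_invol _ g_discr.
have eigen_two_elem :=
  two_elementary_eigenlattice gramL_sym gramL_mul_inv2 g_isom g_invol g_discr.
split; [apply: (eigen_two_elem _ (-1)) | apply: (eigen_two_elem _ 1)].
- by rewrite sqrrN expr1n.
- exact: coinvariant_latE gramL_mul_inv2 g_isom g_invol.
- exact: expr1n.
- by move=> v; rewrite scale1r.
Qed.
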